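(* Let $\mathcal{C}\subset\mathcal{V}$ be a nonempty closed convex set and let $x\in\mathcal{C}$. Then \[ P_V\,N^K_{\mathcal{C}}(x)=N^{S_V}_{P_V\mathcal{C}}(P_Vx), \] where $S_V=V^TKV$.
   Context: $n,m,d,q$ are positive integers. $Q$ is an $n\times m$ matrix with entries in $\{0,1,-1\}$, each column having exactly one $1$ and one $-1$, other entries $0$. $\xi_0\in\mathbb{R}^{nd}$ lists node coordinates, with the endpoints of each spring distinct. $\varphi:\mathbb{R}^{nd}\to\mathbb{R}^m$, $\varphi_i(\xi)=\sqrt{\sum_{k=1}^d(\sum_{j}Q_{ji}\xi_{d(j-1)+k})^2}$, and $D_{\xi_0}\varphi$ is its $m\times nd$ Jacobian at $\xi_0$. $R$ is a $q\times nd$ matrix with $\mathrm{rank}\,R=q$, and $\mathrm{Ker}\,(D_{\xi_0}\varphi)\cap\mathrm{Ker}\,R=\{0\}$; also $m-nd+q>0$. $K=\mathrm{diag}(k_1,\dots,k_m)$ with all $k_i>0$. $\mathcal{U}=\{(D_{\xi_0}\varphi)\zeta:R\zeta=0\}$ and $\mathcal{V}=\{K^{-1}\sigma:(D_{\xi_0}\varphi)^T\sigma\in\mathrm{Im}\,R^T\}$ are subspaces of $\mathbb{R}^m$ (they are complementary and orthogonal w.r.t. $(x,y)\mapsto x^TKy$). $U$, $V$ are matrices whose columns form bases of $\mathcal U$, $\mathcal V$ respectively; $P_U=(U^TKU)^{-1}U^TK$, $P_V=(V^TKV)^{-1}V^TK$. For a nonempty closed convex set $\mathcal{D}\subset\mathbb{R}^N$,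 a point $z\in\mathcal D$ and a symmetric positive definite $N\times N$ matrix $S$, $N^S_{\mathcal D}(z)=\{w\in\mathbb{R}^N:w^TS(c-z)\le0\ \forall c\in\mathcal D\}$. $P_V N^K_{\mathcal C}(x)$ denotes the image of the set under the linear map $P_V$, and $P_V\mathcal C$ likewise. *)

From HB Require Import structures.
From mathcomp Require Import all_boot all_order all_algebra.
From mathcomp Require Import all_classical all_reals all_analysis.
Set Implicit Arguments. Unset Strict Implicit. Unset Printing Implicit Defensive.
Import Order.TTheory GRing.Theory Num.Theory.
Local Open Scope ring_scope.
Local Open Scope classical_set_scope.

Section Defs.
Variable R : realType.

(* Node coordinates xi in R^{nd}: coordinate k of node j (0-based) is entry
   d*j + k, i.e. mxvec_index j k. *)
Definition spring_diff (n m d : nat) (Q : 'M[R]_(n, m)) (xi : 'cV[R]_(n * d))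
  (i : 'I_m) (k : 'I_d) : R :=
  \sum_(j < n) Q j i * xi (mxvec_index j k) 0.

Definition phi (n m d : nat) (Q : 'M[R]_(n, m)) (xi : 'cV[R]_(n * d)) (i : 'I_m) : R :=
  Num.sqrt (\sum_(k < d) (spring_diff Q xi i k) ^+ 2).

Definition is_jacobian_phi (n m d : nat) (Q : 'M[R]_(n, m)) (xi0 : 'cV[R]_(n * d))
  (J : 'M[R]_(m, n * d)) : Prop :=
  forall (i : 'I_m) (l : 'I_(n * d)),
    is_derive (0 : R) (1 : R)
      (fun t : R => phi Q (xi0 + t *: delta_mx l (0 : 'I_1)) i) (J i l).

Definition incidence (n m : nat) (Q : 'M[R]_(n, m)) : Prop :=
  (forall j i, Q j i \in [:: 0; 1; -1]) /\
  (forall i, #|[set j | Q j i == 1]| = 1%N) /\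
  (forall i, #|[set j | Q j i == -1]| = 1%N).

Definition calV (n m d q : nat) (J : 'M[R]_(m, n * d)) (Rm : 'M[R]_(q, n * d))
  (k : 'rV[R]_m) : set 'cV[R]_m :=
  [set x | exists sigma : 'cV[R]_m,
      x = invmx (diag_mx k) *m sigma /\
      exists y : 'cV[R]_q, J^T *m sigma = Rm^T *m y].

Definition convex_cV (N : nat) (D : set 'cV[R]_N) : Prop :=
  forall a b t, D a -> D b -> 0 <= t -> t <= 1 -> D (t *: a + (1 - t) *: b).

Definition normal_cone (N : nat) (S : 'M[R]_N) (D : set 'cV[R]_N) (z : 'cV[R]_N)
  : set 'cV[R]_N :=
  [set w | forall c, D c -> (w^T *m S *m (c - z)) 0 0 <= 0].

End Defs.

(** Since [C] lies in the range of [V], every difference [c - x] with [c] in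
    [C] is [V a] for a unique coordinate vector [a = P_V (c - x)].  For such
    differences the [K]-inner product with [w] equals the [S_V]-inner product
    with [P_V w], because [(P_V w)^T S_V = w^T K V].  Hence [P_V] maps the
    [K]-normal cone of [C] into the [S_V]-normal cone of [P_V C], and [u] in the
    latter is the image of [V u], which lies in the former. *)
From HB Require Import structures.
From mathcomp Require Import all_boot all_order all_algebra.
From mathcomp Require Import all_classical all_reals all_analysis.
Import Order.TTheory GRing.Theory Num.Theory.
Set Implicit Arguments. Unset Strict Implicit. Unset Printing Implicit Defensive.
Local Open Scope ring_scope.
Local Open Scope classical_set_scope.

Lemma diag_form_eq0 (R : realFieldType) m (k : 'rV[R]_m) (w : 'rV[R]_m) :
  (forall i, 0 < k 0 i) -> w *m diag_mx k *m w^T = 0 -> w = 0.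
Proof.
move=> k_gt0 /matrixP/(_ 0 0); rewrite !mxE => form0.
have term0 i : (w *m diag_mx k) 0 i * w^T i 0 = 0.
  apply: (psumr_eq0P _ form0) => // j _.
  by rewrite mul_mx_diag !mxE mulrAC -expr2 mulr_ge0 ?sqr_ge0 ?ltW.
apply/rowP => i; move/eqP: (term0 i); rewrite mul_mx_diag !mxE.
by rewrite mulrAC -expr2 mulf_eq0 (gt_eqF (k_gt0 i)) orbF sqrf_eq0 => /eqP.
Qed.

Lemma gram_diag_unitmx (R : realFieldType) m p (k : 'rV[R]_m) (V : 'M[R]_(m, p)) :
  (forall i, 0 < k 0 i) -> \rank V = p -> V^T *m diag_mx k *m V \in unitmx.
Proof.
move=> k_gt0 rankV; set S := V^T *m diag_mx k *m V.
have VT_free : row_free V^T by rewrite /row_free mxrank_tr rankV.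
have ker0 (u : 'rV_p) : u *m S = 0 -> u = 0.
  move=> uS0; apply/eqP; rewrite -(mulmx_free_eq0 _ VT_free); apply/eqP.
  apply: (diag_form_eq0 k_gt0).
  by rewrite trmx_mul trmxK !mulmxA -(mulmxA u) -(mulmxA u) -/S uS0 mul0mx.
rewrite -row_free_unit -kermx_eq0; apply/eqP/row_matrixP => i.
by rewrite row0; apply: ker0; rewrite -row_mul mulmx_ker row0.
Qed.

Section ObliqueProjection.

Variables (R : comUnitRingType) (m p : nat) (K : 'M[R]_m) (V : 'M[R]_(m, p)).
Hypothesis K_sym : K^T = K.
Let S := V^T *m K *m V.
Let P := invmx S *m V^T *m K.
Hypothesis S_unit : S \in unitmx.

Lemma proj_mulV : P *m V = 1%:M.
Proof. by rewrite /P -!mulmxA (mulmxA V^T) mulVmx. Qed.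

Lemma tr_proj_mul_gram (w : 'cV[R]_m) : (P *m w)^T *m S = w^T *m K *m V.
Proof.
have S_sym : S^T = S by rewrite /S !trmx_mul trmxK K_sym mulmxA.
rewrite /P !trmx_mul trmx_inv S_sym K_sym trmxK.
by rewrite -!mulmxA mulVmx // mulmx1 mulmxA.
Qed.

End ObliqueProjection.

Lemma proj_normal_cone (R : realType) m p (K : 'M[R]_m) (V : 'M[R]_(m, p))
    (C : set 'cV[R]_m) (x : 'cV[R]_m) :
  K^T = K -> V^T *m K *m V \in unitmx ->
  C `<=` range (fun a : 'cV[R]_p => V *m a) -> C x ->
  let S := V^T *m K *m V in
  let P := invmx S *m V^T *m K in
  (fun w => P *m w) @` normal_cone K C x
  = normal_cone S ((fun c => P *m c) @` C) (P *m x).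
Proof.
move=> K_sym S_unit C_V Cx S P.
have PV := proj_mulV S_unit.
have diffV c : C c -> exists a, c - x = V *m a /\ P *m c - P *m x = a.
  move=> Cc; have [a1 _ <-] := C_V c Cc; have [a2 _ <-] := C_V x Cx.
  by exists (a1 - a2); rewrite -!mulmxBr mulmxA PV mul1mx.
apply/seteqP; split.
- move=> _ [w w_normal <-] _ [c Cc <-].
  have [a [ca ->]] := diffV c Cc.
  by rewrite tr_proj_mul_gram // -(mulmxA _ V) -ca; exact: w_normal c Cc.
- move=> u u_normal; exists (V *m u); last by rewrite mulmxA PV mul1mx.
  move=> c Cc; have [a [-> Pca]] := diffV c Cc.
  have := u_normal _ (ex_intro2 _ _ c Cc erefl).
  by rewrite Pca trmx_mul /S !mulmxA.
Qed.

Theorem lemma1 (R : realType) (n m d q p : nat)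
  (Q : 'M[R]_(n, m)) (xi0 : 'cV[R]_(n * d)) (J : 'M[R]_(m, n * d))
  (Rm : 'M[R]_(q, n * d)) (k : 'rV[R]_m) (V : 'M[R]_(m, p))
  (C : set 'cV[R]_m) (x : 'cV[R]_m) :
  (0 < n)%N -> (0 < m)%N -> (0 < d)%N -> (0 < q)%N ->
  incidence Q ->
  (forall (i : 'I_m) (j1 j2 : 'I_n), Q j1 i = 1 -> Q j2 i = -1 ->
     exists kk : 'I_d, xi0 (mxvec_index j1 kk) 0 != xi0 (mxvec_index j2 kk) 0) ->
  is_jacobian_phi Q xi0 J ->
  \rank Rm = q ->
  (forall zeta : 'cV[R]_(n * d), J *m zeta = 0 -> Rm *m zeta = 0 -> zeta = 0) ->
  (n * d < m + q)%N ->
  (forall i, 0 < k 0 i) ->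
  (* the columns of V form a basis of calV *)
  \rank V = p ->
  (forall v : 'cV[R]_m, calV J Rm k v <-> exists c : 'cV[R]_p, v = V *m c) ->
  (* C is a nonempty closed convex subset of calV, and x \in C *)
  C !=set0 -> closed (C : set 'M[R^o]_(m, 1)) -> convex_cV C -> C `<=` calV J Rm k ->
  C x ->
  let K := diag_mx k in
  let SV := V^T *m K *m V in
  let PV := invmx SV *m V^T *m K in
  (fun w => PV *m w) @` normal_cone K C x
  = normal_cone SV ((fun c => PV *m c) @` C) (PV *m x).
Proof.
move=> _ _ _ _ _ _ _ _ _ _ k_gt0 rankV V_basis _ _ _ C_calV Cx K SV PV.
apply: proj_normal_cone => //.
- exact: tr_diag_mx.
- exact: gram_diag_unitmx.
- by move=> c /C_calV /V_basis [a ->]; exists a.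
Qed.
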